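(* For $n = 2^i$ with $i \ge 2$, let $W(V)$ be the word on an ordered $n$-element nail set $V$ defined below. Then $W(V)$ solves the $2$-out-of-$n$ picture-hanging puzzle on $V$, and its formal (unreduced) length is \[ \lambda(W(V)) = \tfrac{8}{3}\, n^{\log_2 6} - 4 n^2 = \tfrac{8}{3}\cdot 6^i - 4\cdot 4^i ; \] in particular the freely reduced length of this solution is at most $\tfrac{8}{3} n^{\log_2 6} - 4n^2$. Definitions: For an ordered nail set $U$ with $|U| = 2^t$, the balanced commutator tree $B(U)$ is the generator if $|U|=1$, and otherwise $B(U) = [B(U_1), B(U_2)]$ with $U_1$ the first half and $U_2$ the second half of $U$. For an ordered nail set $U$ of size $2^t$, $t \ge 1$: if $U = \{a,b\}$ (in this order) then $W(U) = a + b$; if $|U| \ge 4$, let $L$ be the first half and $R$ the second half of $U$, let $P = W(L)$, $Q = W(R)$, $C = B(L) + B(R)$, let $X$ be one of $P, Q, C$ of maximal formal length $\lambda$, let $Y, Z$ be the other two (in either order), and set $W(U) = [X, [Y, Z]]$.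
   Context: Words are elements of the free group on the nails, written additively ($+$ group operation, $-$ inverse, $0$ identity); $[a,b] = a + b - a - b$. The formal length $\lambda$ of an expression is its symbol count before any free reduction: $\lambda(\text{generator}) = 1$, $\lambda(x + y) = \lambda(x) + \lambda(y)$, $\lambda([x,y]) = 2\lambda(x) + 2\lambda(y)$. The (reduced) length of a word is the number of letters of its freely reduced form. For $S \subseteq V$, $w|_S$ is the image of $w$ under the homomorphism killing the generators in $S$. A solution to the $k$-out-of-$n$ picture-hanging puzzle on a set $V$ of $n$ nails is a word $w$ with $w|_S = 0 \iff |S| \ge k$ for all $S \subseteq V$ (equivalently for $k\ge1$: $w \ne 0$, removing any $k$ nails gives $0$, removing fewer leaves it nonzero). *)

From mathcomp Require Import all_boot all_order all_algebra.
Set Implicit Arguments. Unset Strict Implicit. Unset Printing Implicit Defensive.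

Section PictureHanging.
Variable T : eqType.

(* A letter: (nail, true) is the generator, (nail, false) its inverse. *)
Definition letter := (T * bool)%type.

(* Formal expressions built from generators with +, - and commutators.
   EZero (the identity 0) is only used as a dummy value in degenerate cases. *)
Inductive expr : Type :=
| EZero : expr
| EGen : T -> expr
| EAdd : expr -> expr -> expr
| ENeg : expr -> expr
| EComm : expr -> expr -> expr.

Fixpoint flen (e : expr) : nat :=
  match e with
  | EZero => 0
  | EGen _ => 1
  | EAdd x y => flen x + flen y
  | ENeg x => flen x
  | EComm x y => 2 * flen x + 2 * flen y
  end.

Definition inv_word (w : seq letter) : seq letter :=
  rev (map (fun l => (l.1, ~~ l.2)) w).

Fixpoint raw (e : expr) : seq letter :=
  match e with
  | EZero => [::]
  | EGen a => [:: (a, true)]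
  | EAdd x y => raw x ++ raw y
  | ENeg x => inv_word (raw x)
  | EComm x y => raw x ++ raw y ++ inv_word (raw x) ++ inv_word (raw y)
  end.

Definition push (x : letter) (r : seq letter) : seq letter :=
  match r with
  | y :: r' => if (y.1 == x.1) && (y.2 != x.2) then r' else x :: r
  | [::] => [:: x]
  end.

Definition reduce (w : seq letter) : seq letter := foldr push [::] w.

Definition rlen (e : expr) : nat := size (reduce (raw e)).

(* w|_S = 0 : image under the homomorphism killing the generators in S is trivial *)
Definition killed (S : seq T) (e : expr) : Prop :=
  reduce (filter (fun l : letter => l.1 \notin S) (raw e)) = [::].

Definition solves (k : nat) (V : seq T) (e : expr) : Prop :=
  forall S : seq T, uniq S -> {subset S <= V} -> (killed S e <-> k <= size S).

Fixpoint Btree (t : nat) (U : seq T) : expr :=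
  match t with
  | 0 => match U with a :: _ => EGen a | [::] => EZero end
  | t'.+1 => EComm (Btree t' (take (2 ^ t') U)) (Btree t' (drop (2 ^ t') U))
  end.

Inductive isW : nat -> seq T -> expr -> Prop :=
| isW_base (a b : T) : isW 1 [:: a; b] (EAdd (EGen a) (EGen b))
| isW_step (t : nat) (U : seq T) (P Q X Y Z : expr) :
    isW t.+1 (take (2 ^ t.+1) U) P ->
    isW t.+1 (drop (2 ^ t.+1) U) Q ->
    let C := EAdd (Btree t.+1 (take (2 ^ t.+1) U)) (Btree t.+1 (drop (2 ^ t.+1) U)) in
    ((X, Y, Z) = (P, Q, C) \/ (X, Y, Z) = (P, C, Q) \/ (X, Y, Z) = (Q, P, C) \/
     (X, Y, Z) = (Q, C, P) \/ (X, Y, Z) = (C, P, Q) \/ (X, Y, Z) = (C, Q, P)) ->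
    flen Y <= flen X -> flen Z <= flen X ->
    isW t.+2 U (EComm X (EComm Y Z)).

End PictureHanging.

From HB Require Import structures.
From mathcomp Require Import all_boot all_order all_algebra.
From mathcomp Require Import zify lra.
Import GRing.Theory Num.Theory.
Set Implicit Arguments. Unset Strict Implicit. Unset Printing Implicit Defensive.

(* Removing two nails kills W(U): either both lie in one half, and W(L) or W(R)
   dies, or they lie in different halves, and both factors of B(L) + B(R) die;
   in each case one entry of [X, [Y, Z]] is trivial.  Removing at most one nail
   leaves W(U) nontrivial, as witnessed by homomorphisms into A5: a finite set
   of pairs (a, b) such that every (W(U), B(U)) can be sent to (a b, [a, b])
   is closed under the recursion for each of the six arrangements of
   [X, [Y, Z]], and so is a set of nonidentity values that W(U) can take while
   a prescribed nail is sent to 1.  For the length, lambda [X, [Y, Z]] is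
   2 lambda X + 4 (lambda Y + lambda Z), and from n = 8 on the halves W(L),
   W(R) are at least as long as B(L) + B(R), so that
   lambda_(t+1) = 6 lambda_t + 8 4^t. *)

Section FreeReduction.
Variable T : eqType.
Implicit Types (x y : letter T) (u v r : seq (letter T)).

Definition inv_letter x : letter T := (x.1, ~~ x.2).

Definition cancels x y := (y.1 == x.1) && (y.2 != x.2).

Definition reduced r := sorted (fun x y => ~~ cancels x y) r.

Definition act u r := foldr (@push T) r u.

Lemma push_reduced x r : reduced r -> reduced (push x r).
Proof.
case: r => [|y r] //= red_yr; case: ifP => [_|not_xy]; first exact: path_sorted red_yr.
by rewrite /reduced /= /cancels not_xy.
Qed.

Lemma push_inv_letter x r : reduced r -> push x (push (inv_letter x) r) = r.
Proof.
case: x => a b; case: r => [|[c d] r] /=; first by rewrite eqxx; case: b.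
rewrite /= eq_sym; case: eqP => [<-|_] /=; last by rewrite eqxx; case: b.
case: b; case: d => //= red_r; rewrite ?eqxx //.
all: by case: r red_r => [|[e f] r] //= /andP[]; rewrite /cancels /= => /negbTE ->.
Qed.

Lemma act_cat u v r : act (u ++ v) r = act u (act v r).
Proof. exact: foldr_cat. Qed.

Lemma act_reduced u r : reduced r -> reduced (act u r).
Proof. by elim: u => //= x u IHu red_r; apply/push_reduced/IHu. Qed.

Lemma inv_word_cons x u : inv_word (x :: u) = inv_word u ++ [:: inv_letter x].
Proof. by rewrite /inv_word /= rev_cons cats1. Qed.

Lemma inv_wordK : involutive (@inv_word T).
Proof.
move=> u; rewrite /inv_word map_rev revK -map_comp -[RHS]map_id.
by apply: eq_map => -[a b] /=; rewrite negbK.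
Qed.

Lemma size_inv_word u : size (inv_word u) = size u.
Proof. by rewrite size_rev size_map. Qed.

Lemma act_inv_word u r : reduced r -> act (inv_word u) (act u r) = r.
Proof.
elim: u r => //= x u IHu r red_r; rewrite inv_word_cons act_cat /=.
have := push_inv_letter (inv_letter x) (act_reduced u red_r).
by case: x => a b; rewrite /inv_letter /= negbK => ->; apply: IHu.
Qed.

Lemma act_inv_wordV u r : reduced r -> act u (act (inv_word u) r) = r.
Proof. by move=> red_r; rewrite -{1}(inv_wordK u) act_inv_word. Qed.

Definition trivial_word u := forall r, reduced r -> act u r = r.

Lemma reduce_trivial u : trivial_word u -> reduce u = [::].
Proof. by move=> tu; apply: tu. Qed.

Lemma trivial_word_cat u v : trivial_word u -> trivial_word v -> trivial_word (u ++ v).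
Proof. by move=> tu tv r red_r; rewrite act_cat tv // tu. Qed.

Lemma trivial_inv_word u : trivial_word u -> trivial_word (inv_word u).
Proof. by move=> tu r red_r; rewrite -{1}(tu r red_r) act_inv_word. Qed.

Definition comm_word u v := u ++ v ++ inv_word u ++ inv_word v.

Lemma trivial_comm_wordl u v : trivial_word u -> trivial_word (comm_word u v).
Proof.
move=> tu r red_r; have red_vr := act_reduced (inv_word v) red_r.
by rewrite !act_cat (trivial_inv_word tu) // tu ?act_reduced // act_inv_wordV.
Qed.

Lemma trivial_comm_wordr u v : trivial_word v -> trivial_word (comm_word u v).
Proof.
move=> tv r red_r; rewrite !act_cat (trivial_inv_word tv) //.
by rewrite tv ?act_reduced // act_inv_wordV.
Qed.

Lemma size_push x r : size (push x r) <= (size r).+1.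
Proof. by case: r => [|y r] //=; case: ifP => //= _; lia. Qed.

Lemma size_reduce u : size (reduce u) <= size u.
Proof. by elim: u => //= x u IHu; apply: leq_trans (size_push _ _) _. Qed.

End FreeReduction.

Section Arrangements.
Variable A : Type.
Implicit Types p q c x y z : A.

Definition arrange (s : nat) p q c : A * A * A :=
  match s with
  | 0 => (p, q, c) | 1 => (p, c, q) | 2 => (q, p, c)
  | 3 => (q, c, p) | 4 => (c, p, q) | _ => (c, q, p)
  end.

Lemma arrangeP x y z p q c :
  ((x, y, z) = (p, q, c) \/ (x, y, z) = (p, c, q) \/ (x, y, z) = (q, p, c) \/
   (x, y, z) = (q, c, p) \/ (x, y, z) = (c, p, q) \/ (x, y, z) = (c, q, p)) <->
  exists2 s, s < 6 & (x, y, z) = arrange s p q c.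
Proof.
split=> [|[s _ ->]]; last by case: s => [|[|[|[|[|s]]]]]; do ?[left; reflexivity | right].
by case=> [->|[->|[->|[->|[->|->]]]]];
  [exists 0 | exists 1 | exists 2 | exists 3 | exists 4 | exists 5].
Qed.

Lemma arrange_some (R : A -> Prop) s x y z p q c :
  (x, y, z) = arrange s p q c -> R p \/ R q \/ R c -> R x \/ R y \/ R z.
Proof. by case: s => [|[|[|[|[|s]]]]] [-> -> ->]; tauto. Qed.

Lemma exists_arrange_max (f : A -> nat) p q c :
  exists2 s, s < 6 & let: (x, y, z) := arrange s p q c in f y <= f x /\ f z <= f x.
Proof.
have [le_qp|lt_pq] := leqP (f q) (f p); have [le_cp|lt_pc] := leqP (f c) (f p);
  have [le_cq|lt_qc] := leqP (f c) (f q).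
all: first [by exists 0 => //=; lia | by exists 2 => //=; lia | by exists 4 => //=; lia].
Qed.

End Arrangements.

Section Construction.
Variable T : eqType.
Implicit Types (U : seq T) (e w : expr T).

Lemma size_halves n U : size U = n.*2 ->
  size (take n U) = n /\ size (drop n U) = n.
Proof. by move=> sU; rewrite size_drop size_takel sU -addnn ?leq_addr // addnK. Qed.

Lemma isW_size t U w : isW t U w -> size U = 2 ^ t.
Proof.
elim=> // {}t {}U P Q X Y Z _ sL _ sR; rewrite size_take size_drop in sL sR.
by move: sL; case: ltnP => [_ _|le_U]; rewrite !expnS in sR *; lia.
Qed.

Lemma flen_Btree t U : size U = 2 ^ t -> flen (Btree t U) = 4 ^ t.
Proof.
elim: t U => [|t IHt] U; first by case: U => [|a [|]].
rewrite expnS mul2n => /size_halves[sL sR].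
by rewrite /= (IHt _ sL) (IHt _ sR) expnS; lia.
Qed.

Lemma size_raw e : size (raw e) = flen e.
Proof. by elim: e => //= *; rewrite ?size_cat ?size_inv_word; lia. Qed.

(* The length of [X, [Y, Z]] when the lengths of X, Y, Z are a, a, c in some
   order and X is a longest one. *)
Definition Wstep a c := 2 * maxn a c + 4 * (a + minn a c).

Fixpoint Wlen t :=
  if t is t'.+1 then if t' is 0 then 2 else Wstep (Wlen t') (2 * 4 ^ t') else 0.

Lemma WlenSS t : Wlen t.+2 = Wstep (Wlen t.+1) (2 * 4 ^ t.+1).
Proof. by []. Qed.

Lemma flen_isW t U w : isW t U w -> flen w = Wlen t.
Proof.
elim=> // {}t {}U P Q X Y Z HP fP HQ fQ C /arrangeP[s _ eXYZ].
have fC : flen C = 2 * 4 ^ t.+1.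
  by rewrite /C; cbn [flen]; rewrite !flen_Btree ?(isW_size HP) ?(isW_size HQ) // expnS; lia.
rewrite WlenSS /Wstep -fP -fC.
by case: s eXYZ => [|[|[|[|[|s]]]]] [-> -> ->] /=; rewrite ?fP ?fQ; lia.
Qed.

Lemma exp4_le_exp6 t : 2 <= t -> 9 * 4 ^ t <= 4 * 6 ^ t.
Proof. by elim: t => // t IHt; rewrite leq_eqVlt => /predU1P[<- //|/IHt]; rewrite !expnS; lia. Qed.

Lemma Wlen_closed t : 2 <= t -> 3 * Wlen t + 12 * 4 ^ t = 8 * 6 ^ t.
Proof.
elim: t => // -[|[|t]] IHt _ //.
have := exp4_le_exp6 (isT : 2 <= t.+2); have := IHt isT.
rewrite (WlenSS t.+1) /Wstep !(expnS _ t.+2); lia.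
Qed.

Lemma exists_isW t U : size U = 2 ^ t.+1 -> exists w, isW t.+1 U w.
Proof.
elim: t U => [|t IHt] U.
  by case: U => [|a [|b [|]]] // _; exists (EAdd (EGen a) (EGen b)); apply: isW_base.
rewrite expnS mul2n => /size_halves[/IHt[P HP] /IHt[Q HQ]].
pose C := EAdd (Btree t.+1 (take (2 ^ t.+1) U)) (Btree t.+1 (drop (2 ^ t.+1) U)).
have [s lt_s6] := exists_arrange_max (@flen T) P Q C.
case eXYZ: (arrange s P Q C) => [[X Y] Z] [le_YX le_ZX].
exists (EComm X (EComm Y Z)); apply: isW_step HP HQ _ le_YX le_ZX.
by apply/arrangeP; exists s.
Qed.

Local Open Scope ring_scope.

Lemma Wlen_rat t : (2 <= t)%N ->
  (Wlen t)%:R = 8%:R / 3%:R * 6%:R ^+ t - 4%:R * (2 ^ t)%:R ^+ 2 :> rat.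
Proof.
move/Wlen_closed/(congr1 (fun n => n%:R : rat)); rewrite natrD !natrM => closed_form.
have -> : (2 ^ t)%:R ^+ 2 = (4 ^ t)%:R :> rat by rewrite -natrX -expnM mulnC expnM.
by move: closed_form; rewrite !natrX; lra.
Qed.

End Construction.

Section TwoNailsKill.
Variable T : eqType.
Implicit Types (S U : seq T) (u : seq (letter T)) (e w : expr T).

Definition kept S u := [seq l <- u | l.1 \notin S].

Lemma kept_inv_word S u : kept S (inv_word u) = inv_word (kept S u).
Proof. by rewrite /kept /inv_word filter_rev filter_map. Qed.

Lemma kept_comm S x y :
  kept S (raw (EComm x y)) = comm_word (kept S (raw x)) (kept S (raw y)).
Proof. by rewrite /= /kept !filter_cat -!/(kept _ _) !kept_inv_word. Qed.

Lemma mem_take_drop n U (a : T) : a \in U -> a \in take n U \/ a \in drop n U.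
Proof. by rewrite -{1}(cat_take_drop n U) mem_cat => /orP. Qed.

Lemma uniq_notin_take n U (a : T) : uniq U -> a \in drop n U -> a \notin take n U.
Proof. by rewrite -{1}(cat_take_drop n U) cat_uniq => /and3P[_ /hasPn + _]; apply. Qed.

Lemma trivial_kept_Btree S t U a : size U = 2 ^ t -> a \in U -> a \in S ->
  trivial_word (kept S (raw (Btree t U))).
Proof.
elim: t U => [|t IHt] U.
  by case: U => [|b [|]] // _; rewrite inE => /eqP-> aS; rewrite /kept /= aS.
rewrite expnS mul2n => /size_halves[sL sR] /(mem_take_drop (2 ^ t))[aL|aR] aS.
  by rewrite kept_comm; apply/trivial_comm_wordl/(IHt _ sL aL aS).
by rewrite kept_comm; apply/trivial_comm_wordr/(IHt _ sR aR aS).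
Qed.

Lemma trivial_kept_W S t U w a b : isW t U w -> a != b -> a \in U -> b \in U ->
  a \in S -> b \in S -> trivial_word (kept S (raw w)).
Proof.
move=> HW; elim: HW a b => [c d|{}t {}U P Q X Y Z HP IHP HQ IHQ C /arrangeP[s _ eXYZ] _ _]
  a b neq_ab aU bU aS bS.
  move: aU bU neq_ab aS bS; rewrite !inE.
  by case/orP=> /eqP-> /orP[]/eqP-> //; rewrite ?eqxx // => _ cS dS; rewrite /kept /= cS dS.
have sL := isW_size HP; have sR := isW_size HQ.
have trivial_kept_C x y : x \in take (2 ^ t.+1) U -> y \in drop (2 ^ t.+1) U ->
    x \in S -> y \in S -> trivial_word (kept S (raw C)).
  move=> xL yR xS yS; rewrite /kept filter_cat -!/(kept _ _).
  exact: trivial_word_cat (trivial_kept_Btree sL xL xS) (trivial_kept_Btree sR yR yS).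
have : trivial_word (kept S (raw P)) \/ trivial_word (kept S (raw Q)) \/
       trivial_word (kept S (raw C)).
  case: (mem_take_drop (2 ^ t.+1) aU) => aX; case: (mem_take_drop (2 ^ t.+1) bU) => bX.
  - by left; apply: IHP aX bX aS bS.
  - by right; right; apply: trivial_kept_C aX bX aS bS.
  - by right; right; apply: trivial_kept_C bX aX bS aS.
  - by right; left; apply: IHQ aX bX aS bS.
move/(arrange_some (R := fun e => trivial_word (kept S (raw e))) eXYZ).
rewrite !kept_comm => -[tX|[tY|tZ]].
- exact: trivial_comm_wordl.
- exact/trivial_comm_wordr/trivial_comm_wordl.
- exact/trivial_comm_wordr/trivial_comm_wordr.
Qed.

End TwoNailsKill.

Section Evaluation.
Variables (T : eqType) (G : groupType).
Local Open Scope group_scope.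
Implicit Types (phi psi : T -> G) (u v r : seq (letter T)) (e w : expr T) (S U : seq T).

Definition comm (x y : G) := x * y / x / y.

Lemma comm1x (x : G) : comm 1 x = 1.
Proof. by rewrite /comm mul1g invg1 mulg1 mulgV. Qed.

Lemma commx1 (x : G) : comm x 1 = 1.
Proof. by rewrite /comm mulg1 mulgV invg1 mulg1. Qed.

Fixpoint eval phi e :=
  match e with
  | EZero => 1
  | EGen a => phi a
  | EAdd x y => eval phi x * eval phi y
  | ENeg x => (eval phi x)^-1
  | EComm x y => comm (eval phi x) (eval phi y)
  end.

Definition eval_letter phi (l : letter T) := if l.2 then phi l.1 else (phi l.1)^-1.

Definition eval_word phi u := \prod_(l <- u) eval_letter phi l.

Lemma eval_word_cat phi u v : eval_word phi (u ++ v) = eval_word phi u * eval_word phi v.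
Proof. exact: big_cat. Qed.

Lemma eval_inv_letter phi l : eval_letter phi (inv_letter l) = (eval_letter phi l)^-1.
Proof. by case: l => a [] //=; rewrite invgK. Qed.

Lemma eval_inv_word phi u : eval_word phi (inv_word u) = (eval_word phi u)^-1.
Proof.
rewrite /eval_word -[u in RHS]revK -prodgV /inv_word -map_rev big_map.
by apply: eq_bigr => l _; rewrite eval_inv_letter.
Qed.

Lemma eval_word_push phi x r : eval_word phi (push x r) = eval_letter phi x * eval_word phi r.
Proof.
rewrite /eval_word; case: x r => a c [|[b d] r] /=; first by rewrite big_cons.
case: ifP => [/andP[/eqP-> neq_dc]|_]; last by rewrite big_cons.
have -> : d = ~~ c by case: c d neq_dc => [] [].
by rewrite big_cons -[(a, ~~ c)]/(inv_letter (a, c)) eval_inv_letter mulVKg.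
Qed.

Lemma eval_word_reduce phi u : eval_word phi (reduce u) = eval_word phi u.
Proof.
by elim: u => //= x u IHu; rewrite eval_word_push IHu /eval_word big_cons.
Qed.

Lemma eval_word_raw phi e : eval_word phi (raw e) = eval phi e.
Proof.
elim: e => [|a|x IHx y IHy|x IHx|x IHx y IHy] /=.
- exact: big_nil.
- by rewrite /eval_word big_seq1.
- by rewrite eval_word_cat IHx IHy.
- by rewrite eval_inv_word IHx.
- by rewrite !eval_word_cat !eval_inv_word IHx IHy /comm !mulgA.
Qed.

Lemma eval_word_kept phi S u : {in S, forall a, phi a = 1} ->
  eval_word phi (kept S u) = eval_word phi u.
Proof.
move=> phiS; rewrite /eval_word big_filter big_mkcond; apply: eq_bigr => -[a b] _ /=.
by case: ifPn => // /negbNE/phiS; rewrite /eval_letter /= => ->; case: b; rewrite ?invg1.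
Qed.

Lemma eval_killed S phi e : killed S e -> {in S, forall a, phi a = 1} -> eval phi e = 1.
Proof.
move=> kill_e phiS.
by rewrite -eval_word_raw -(eval_word_kept _ phiS) -eval_word_reduce kill_e; apply: big_nil.
Qed.

Definition nest (xyz : G * G * G) := let: (x, y, z) := xyz in comm x (comm y z).

Definition values phi t U w := (eval phi w, eval phi (Btree t U)).

Definition base_values (ab : G * G) := (ab.1 * ab.2, comm ab.1 ab.2).

Definition step_values s (vL vR : G * G) :=
  (nest (arrange s vL.1 vR.1 (vL.2 * vR.2)), comm vL.2 vR.2).

Lemma values_step phi t U P Q X Y Z s :
  let L := take (2 ^ t.+1) U in let R := drop (2 ^ t.+1) U in
  (X, Y, Z) = arrange s P Q (EAdd (Btree t.+1 L) (Btree t.+1 R)) ->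
  values phi t.+2 U (EComm X (EComm Y Z)) =
    step_values s (values phi t.+1 L P) (values phi t.+1 R Q).
Proof. by move=> L R; case: s => [|[|[|[|[|s]]]]] [-> -> ->]. Qed.

Lemma eq_in_values t U w phi psi : isW t U w -> {in U, phi =1 psi} ->
  values phi t U w = values psi t U w.
Proof.
move=> HW; elim: HW phi psi => [a b|{}t {}U P Q X Y Z _ IHP _ IHQ C /arrangeP[s _ eXYZ] _ _]
  phi psi eq_phi.
  by rewrite /values /= !eq_phi // !inE eqxx ?orbT.
rewrite !(values_step _ eXYZ) (IHP phi psi) ?(IHQ phi psi) // => a aU; apply: eq_phi.
  exact: mem_drop aU.
exact: mem_take aU.
Qed.

Definition glue (L : seq T) (f g : T -> G) a := if a \in L then f a else g a.

Lemma values_glue t U P Q X Y Z s f g :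
  let L := take (2 ^ t.+1) U in let R := drop (2 ^ t.+1) U in
  isW t.+1 L P -> isW t.+1 R Q -> uniq U ->
  (X, Y, Z) = arrange s P Q (EAdd (Btree t.+1 L) (Btree t.+1 R)) ->
  values (glue L f g) t.+2 U (EComm X (EComm Y Z)) =
    step_values s (values f t.+1 L P) (values g t.+1 R Q).
Proof.
move=> L R HP HQ uU /values_step->; congr step_values; apply: eq_in_values => // a aX.
  by rewrite /glue aX.
by rewrite /glue (negPf (uniq_notin_take uU aX)).
Qed.

End Evaluation.

Section Realization.
Variables (T : eqType) (G : groupType).
Local Open Scope group_scope.
Variables (AB : seq (G * G)) (K : seq G).

Hypothesis AB_closed : forall ab s, ab \in AB -> s < 6 ->
  exists2 u, u \in AB & exists2 v, v \in AB &
    base_values ab = step_values s (base_values u) (base_values v).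

(* The killed nail lies in the left half, resp. the right half, so B(L),
   resp. B(R), is sent to 1. *)
Hypothesis K_closedl : forall k s, k \in K -> s < 6 ->
  exists2 k', k' \in K & exists2 v, v \in AB & (k, 1) = step_values s (k', 1) (base_values v).

Hypothesis K_closedr : forall k s, k \in K -> s < 6 ->
  exists2 k', k' \in K & exists2 v, v \in AB & (k, 1) = step_values s (base_values v) (k', 1).

Hypothesis K_neq1 : forall k, k \in K -> k != 1.

Lemma realize_AB t (U : seq T) w ab : isW t U w -> uniq U -> ab \in AB ->
  exists phi, values phi t U w = base_values ab.
Proof.
move=> HW; elim: HW ab => [a b|{}t {}U P Q X Y Z HP IHP HQ IHQ C /arrangeP[s lt_s6 eXYZ] _ _]
  ab uU abAB.
  exists (fun c => if c == a then ab.1 else ab.2).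
  by move: uU; rewrite /values /= inE andbT eqxx eq_sym => /negPf->.
have [u uAB [v vAB ->]] := AB_closed abAB lt_s6.
have [f <-] := IHP u (take_uniq _ uU) uAB; have [g <-] := IHQ v (drop_uniq _ uU) vAB.
by exists (glue (take (2 ^ t.+1) U) f g); apply: values_glue.
Qed.

Lemma realize_K t (U : seq T) w a k : isW t U w -> uniq U -> a \in U -> k \in K ->
  exists2 phi, phi a = 1 & values phi t U w = (k, 1).
Proof.
move=> HW; elim: HW a k => [b c|{}t {}U P Q X Y Z HP IHP HQ IHQ C /arrangeP[s lt_s6 eXYZ] _ _]
  a k uU aU kK.
  exists (fun d => if d == a then 1 else k); rewrite ?eqxx //.
  move: uU aU; rewrite /values /= !inE andbT => neq_bc /orP[]/eqP->.
    by rewrite eqxx eq_sym (negPf neq_bc) mul1g comm1x.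
  by rewrite eqxx (negPf neq_bc) mulg1 commx1.
have uL := take_uniq (2 ^ t.+1) uU; have uR := drop_uniq (2 ^ t.+1) uU.
have [aL|aR] := mem_take_drop (2 ^ t.+1) aU.
  have [k' k'K [v vAB ->]] := K_closedl kK lt_s6.
  have [f fa <-] := IHP a k' uL aL k'K; have [g <-] := realize_AB HQ uR vAB.
  by exists (glue (take (2 ^ t.+1) U) f g); [rewrite /glue aL | apply: values_glue].
have [k' k'K [v vAB ->]] := K_closedr kK lt_s6.
have [f <-] := realize_AB HP uL vAB; have [g ga <-] := IHQ a k' uR aR k'K.
exists (glue (take (2 ^ t.+1) U) f g); last exact: values_glue.
by rewrite /glue (negPf (uniq_notin_take uU aR)).
Qed.

Lemma isW_solves t (U : seq T) w k : isW t U w -> uniq U -> k \in K -> solves 2 U w.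
Proof.
move=> HW uU kK S uS sSU; split=> [kill_w|]; last first.
  case: S uS sSU => [|a [|b S]] // /andP[]; rewrite inE negb_or => /andP[neq_ab _] _ sSU _.
  apply: reduce_trivial (trivial_kept_W HW neq_ab _ _ _ _); rewrite ?sSU ?inE ?eqxx ?orbT //.
rewrite leqNgt; apply/negP => ltS2.
have [a aU sSa] : exists2 a, a \in U & {subset S <= [:: a]}.
  case: S uS sSU ltS2 {kill_w} => [|a [|]] // _ sSU _; last by exists a; rewrite ?sSU ?mem_head.
  have : 0 < size U by rewrite (isW_size HW) expn_gt0.
  by case: U {HW uU sSU} => // a U _; exists a; rewrite ?mem_head.
have [phi phia [eWk _]] := realize_K HW uU aU kK.
have phiS : {in S, forall b, phi b = 1} by move=> b /sSa; rewrite inE => /eqP->.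
by move: (K_neq1 kK); rewrite -eWk (eval_killed kill_w phiS) eqxx.
Qed.

End Realization.

Section Certificates.
Variable G : groupType.
Local Open Scope group_scope.
Implicit Types (AB : seq (G * G)) (K : seq G).

Definition closure_certb (C : seq ((G * G) * seq (nat * nat))) :=
  let AB := [seq c.1 | c <- C] in
  all (fun c => all (fun s => let: (i, j) := nth (0, 0) c.2 s in
    [&& i < size AB, j < size AB &
        base_values c.1 == step_values s (base_values (nth c.1 AB i)) (base_values (nth c.1 AB j))])
    (iota 0 6)) C.

Lemma closure_certbP C : closure_certb C ->
  let AB := [seq c.1 | c <- C] in forall ab s, ab \in AB -> s < 6 ->
  exists2 u, u \in AB & exists2 v, v \in AB &
    base_values ab = step_values s (base_values u) (base_values v).
Proof.
move=> /allP cert AB _ s /mapP[c cC ->] lt_s6.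
have /allP/(_ s) := cert c cC; rewrite mem_iota lt_s6 => /(_ isT).
case: (nth _ _ s) => i j /and3P[lt_i lt_j /eqP->].
by exists (nth c.1 AB i); rewrite ?mem_nth //; exists (nth c.1 AB j); rewrite ?mem_nth.
Qed.

Definition kill_closedb AB K :=
  let KV := [seq (k, base_values v) | k <- K, v <- AB] in
  all (fun k => (k != 1) && all (fun s =>
      has (fun kv => (k, 1) == step_values s (kv.1, 1) kv.2) KV &&
      has (fun kv => (k, 1) == step_values s kv.2 (kv.1, 1)) KV) (iota 0 6)) K.

Lemma kill_closedbP AB K : kill_closedb AB K -> [/\
  (forall k, k \in K -> k != 1),
  (forall k s, k \in K -> s < 6 -> exists2 k', k' \in K & exists2 v, v \in AB &
     (k, 1) = step_values s (k', 1) (base_values v)) &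
  (forall k s, k \in K -> s < 6 -> exists2 k', k' \in K & exists2 v, v \in AB &
     (k, 1) = step_values s (base_values v) (k', 1))].
Proof.
move=> /allP closed; split=> [k /closed/andP[] // | k s kK lt_s6 | k s kK lt_s6];
  have /andP[_ /allP/(_ s)] := closed k kK; rewrite mem_iota lt_s6 => /(_ isT)/andP[kl kr].
  by have /hasP[_ /allpairsP[[k' v] [k'K vAB ->]] /eqP->] := kl; exists k' => //; exists v.
by have /hasP[_ /allpairsP[[k' v] [k'K vAB ->]] /eqP->] := kr; exists k' => //; exists v.
Qed.

End Certificates.

Section ListPermutations.
Variable n : nat.
Implicit Types p q r : seq nat.

Definition is_lperm p := perm_eq p (iota 0 n).

Definition lcomp p q := map (nth 0 q) p.
Definition linv p := map (index^~ p) (iota 0 n).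

Lemma lperm_size p : is_lperm p -> size p = n.
Proof. by move/perm_size; rewrite size_iota. Qed.

Lemma lperm_lt p i : is_lperm p -> i \in p -> i < n.
Proof. by move/perm_mem=> -> ; rewrite mem_iota. Qed.

Lemma lcomp1p q : is_lperm q -> lcomp (iota 0 n) q = q.
Proof. by move=> hq; rewrite /lcomp -(lperm_size hq) -/(mkseq _ _) mkseq_nth. Qed.

Lemma lcompp1 p : is_lperm p -> lcomp p (iota 0 n) = p.
Proof.
move=> hp; rewrite /lcomp -[RHS]map_id; apply/eq_in_map => i /(lperm_lt hp) lt_in.
by rewrite nth_iota.
Qed.

Lemma lcompA p q r : is_lperm p -> is_lperm q ->
  lcomp (lcomp p q) r = lcomp p (lcomp q r).
Proof.
move=> hp hq; rewrite /lcomp -map_comp; apply/eq_in_map => i /(lperm_lt hp) lt_in /=.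
by rewrite (nth_map 0) // (lperm_size hq).
Qed.

Lemma map_index_lperm p : is_lperm p -> map (index^~ p) p = iota 0 n.
Proof.
move=> hp; have up : uniq p by rewrite (perm_uniq hp) iota_uniq.
rewrite -{2}(mkseq_nth 0 p) (lperm_size hp) /mkseq -map_comp -[RHS]map_id.
by apply/eq_in_map => i; rewrite mem_iota /= => lt_in; rewrite index_uniq ?(lperm_size hp).
Qed.

Lemma lcomp_lperm p q : is_lperm p -> is_lperm q -> is_lperm (lcomp p q).
Proof.
move=> hp hq; apply: perm_trans _ (hq); rewrite -{2}(lcomp1p hq).
exact: perm_map.
Qed.

Lemma linv_lperm p : is_lperm p -> is_lperm (linv p).
Proof.
move=> hp; rewrite /is_lperm /linv -{2}(map_index_lperm hp).
by apply: perm_map; rewrite perm_sym.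
Qed.

Lemma lcompVp p : is_lperm p -> lcomp (linv p) p = iota 0 n.
Proof.
move=> hp; rewrite /lcomp /linv -map_comp -[RHS]map_id.
by apply/eq_in_map => i; rewrite mem_iota /= => lt_in; rewrite nth_index // (perm_mem hp) mem_iota.
Qed.

Lemma lcomppV p : is_lperm p -> lcomp p (linv p) = iota 0 n.
Proof.
move=> hp; rewrite -(map_index_lperm hp) /lcomp; apply/eq_in_map => i /(lperm_lt hp) lt_in.
by rewrite (nth_map 0) ?size_iota // nth_iota.
Qed.

Lemma iota_lperm : is_lperm (iota 0 n).
Proof. exact: perm_refl. Qed.

Record lperm := LPerm {lperm_val :> seq nat; lperm_valP : is_lperm lperm_val}.

HB.instance Definition _ := [isSub for lperm_val].
HB.instance Definition _ := [Equality of lperm by <:].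
HB.instance Definition _ := [Choice of lperm by <:].

Lemma lperm_of_subproof p : is_lperm (if is_lperm p then p else iota 0 n).
Proof. by case: ifP => // _; exact: iota_lperm. Qed.

Definition lperm_of p : lperm := LPerm (lperm_of_subproof p).

Definition lperm_one : lperm := LPerm iota_lperm.
Definition lperm_mul (x y : lperm) : lperm :=
  LPerm (lcomp_lperm (lperm_valP x) (lperm_valP y)).
Definition lperm_inv (x : lperm) : lperm := LPerm (linv_lperm (lperm_valP x)).

Lemma lperm_mulA : associative lperm_mul.
Proof. by move=> x y z; apply: val_inj; rewrite /= lcompA ?(lperm_valP x) ?(lperm_valP y). Qed.

Lemma lperm_mul1 : left_id lperm_one lperm_mul.
Proof. by move=> x; apply: val_inj; rewrite /= lcomp1p ?(lperm_valP x). Qed.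

Lemma lperm_mulg1 : right_id lperm_one lperm_mul.
Proof. by move=> x; apply: val_inj; rewrite /= lcompp1 ?(lperm_valP x). Qed.

Lemma lperm_mulVg : left_inverse lperm_one lperm_inv lperm_mul.
Proof. by move=> x; apply: val_inj; rewrite /= lcompVp ?(lperm_valP x). Qed.

Lemma lperm_mulgV : right_inverse lperm_one lperm_inv lperm_mul.
Proof. by move=> x; apply: val_inj; rewrite /= lcomppV ?(lperm_valP x). Qed.

HB.instance Definition _ := isGroup.Build lperm
  lperm_mulA lperm_mul1 lperm_mulg1 lperm_mulVg lperm_mulgV.

End ListPermutations.

(* Entry i holds a pair (a, b) and, for each arrangement s < 6, indices (j, k)
   of two entries whose values combine by step s into the values of entry i.
   All these permutations of {0, ..., 4} are even; the data come from a
   computer search. *)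
Definition A5_certificate : seq ((lperm 5 * lperm 5) * seq (nat * nat)) :=
  [seq ((lperm_of 5 c.1.1, lperm_of 5 c.1.2), c.2) | c <- [::
  (([:: 3; 4; 0; 1; 2], [:: 4; 2; 3; 0; 1]), [:: (11, 49); (11, 53); (37, 113); (12, 102); (22, 113); (4, 118)]);
  (([:: 4; 2; 0; 1; 3], [:: 4; 2; 1; 3; 0]), [:: (26, 75); (26, 55); (68, 57); (22, 90); (41, 0); (44, 110)]);
  (([:: 1; 2; 0; 3; 4], [:: 4; 0; 1; 2; 3]), [:: (86, 34); (86, 81); (29, 56); (46, 28); (17, 27); (18, 80)]);
  (([:: 0; 1; 3; 4; 2], [:: 0; 2; 3; 1; 4]), [:: (5, 24); (5, 24); (18, 4); (18, 4); (9, 66); (4, 122)]);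
  (([:: 0; 2; 4; 3; 1], [:: 0; 4; 2; 1; 3]), [:: (23, 35); (23, 43); (65, 66); (35, 104); (36, 100); (23, 107)]);
  (([:: 1; 2; 3; 4; 0], [:: 4; 0; 2; 3; 1]), [:: (37, 32); (68, 98); (30, 55); (37, 122); (16, 82); (1, 108)]);
  (([:: 3; 0; 2; 1; 4], [:: 2; 1; 3; 0; 4]), [:: (34, 23); (23, 88); (52, 122); (18, 70); (52, 56); (55, 40)]);
  (([:: 3; 0; 4; 2; 1], [:: 2; 4; 1; 0; 3]), [:: (11, 30); (9, 45); (9, 69); (67, 73); (23, 54); (5, 119)]);
  (([:: 4; 0; 2; 3; 1], [:: 2; 4; 3; 1; 0]), [:: (24, 46); (24, 115); (23, 74); (25, 74); (95, 4); (20, 51)]);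
  (([:: 0; 1; 3; 4; 2], [:: 0; 2; 1; 4; 3]), [:: (65, 66); (33, 100); (36, 64); (35, 82); (3, 112); (3, 120)]);
  (([:: 4; 0; 3; 1; 2], [:: 2; 3; 1; 4; 0]), [:: (65, 114); (14, 2); (39, 1); (14, 2); (108, 102); (41, 68)]);
  (([:: 2; 0; 1; 3; 4], [:: 3; 1; 0; 2; 4]), [:: (76, 20); (75, 31); (2, 122); (122, 52); (40, 38); (40, 31)]);
  (([:: 2; 0; 4; 1; 3], [:: 3; 2; 0; 4; 1]), [:: (4, 99); (2, 48); (24, 86); (11, 44); (4, 40); (21, 109)]);
  (([:: 4; 0; 1; 2; 3], [:: 3; 2; 4; 1; 0]), [:: (36, 30); (36, 48); (32, 12); (15, 79); (7, 37); (7, 50)]);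
  (([:: 3; 0; 2; 1; 4], [:: 3; 4; 2; 0; 1]), [:: (38, 35); (36, 51); (51, 89); (31, 93); (34, 92); (8, 109)]);
  (([:: 0; 1; 4; 2; 3], [:: 0; 3; 1; 2; 4]), [:: (4, 5); (4, 5); (4, 5); (4, 5); (5, 9); (5, 9)]);
  (([:: 4; 0; 2; 3; 1], [:: 3; 2; 4; 1; 0]), [:: (4, 109); (4, 58); (90, 13); (2, 24); (7, 13); (7, 13)]);
  (([:: 2; 0; 3; 4; 1], [:: 3; 2; 0; 4; 1]), [:: (21, 25); (14, 54); (2, 19); (2, 19); (2, 19); (2, 19)]);
  (([:: 1; 2; 4; 0; 3], [:: 3; 0; 4; 2; 1]), [:: (23, 61); (23, 58); (70, 10); (70, 10); (2, 62); (36, 10)]);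
  (([:: 4; 0; 1; 2; 3], [:: 4; 1; 3; 2; 0]), [:: (12, 99); (12, 120); (47, 85); (58, 46); (79, 33); (29, 86)]);
  (([:: 3; 0; 2; 1; 4], [:: 4; 3; 1; 0; 2]), [:: (12, 70); (40, 82); (12, 52); (49, 108); (1, 109); (19, 102)]);
  (([:: 1; 0; 2; 4; 3], [:: 4; 0; 1; 2; 3]), [:: (12, 42); (12, 33); (40, 91); (5, 99); (28, 2); (15, 74)]);
  (([:: 2; 0; 3; 4; 1], [:: 4; 2; 0; 1; 3]), [:: (46, 25); (46, 113); (14, 82); (1, 40); (14, 33); (0, 88)]);
  (([:: 1; 2; 0; 3; 4], [:: 2; 0; 4; 1; 3]), [:: (69, 34); (5, 20); (21, 101); (25, 112); (8, 107); (26, 58)]);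
  (([:: 0; 2; 1; 4; 3], [:: 0; 2; 4; 3; 1]), [:: (5, 104); (120, 65); (82, 35); (33, 100); (15, 78); (5, 65)]);
  (([:: 4; 0; 3; 1; 2], [:: 4; 1; 3; 2; 0]), [:: (35, 1); (2, 27); (43, 59); (10, 101); (97, 22); (105, 22)]);
  (([:: 3; 0; 4; 2; 1], [:: 4; 3; 1; 0; 2]), [:: (5, 86); (40, 32); (20, 53); (56, 7); (28, 52); (28, 2)]);
  (([:: 0; 3; 1; 2; 4], [:: 1; 2; 4; 0; 3]), [:: (26, 15); (69, 23); (15, 25); (44, 101); (55, 114); (116, 55)]);
  (([:: 0; 3; 2; 4; 1], [:: 1; 4; 3; 0; 2]), [:: (77, 20); (87, 77); (17, 45); (17, 6); (14, 63); (39, 12)]);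
  (([:: 1; 2; 3; 4; 0], [:: 4; 1; 0; 3; 2]), [:: (5, 16); (11, 68); (8, 7); (11, 39); (91, 77); (54, 119)]);
  (([:: 0; 2; 3; 1; 4], [:: 1; 3; 0; 4; 2]), [:: (22, 3); (21, 112); (3, 19); (67, 47); (21, 47); (21, 47)]);
  (([:: 1; 3; 2; 0; 4], [:: 3; 1; 4; 0; 2]), [:: (21, 9); (111, 9); (68, 9); (21, 9); (113, 74); (105, 37)]);
  (([:: 1; 4; 3; 0; 2], [:: 3; 1; 2; 4; 0]), [:: (18, 16); (47, 22); (47, 22); (14, 99); (14, 86); (96, 99)]);
  (([:: 0; 1; 4; 2; 3], [:: 1; 2; 3; 4; 0]), [:: (7, 1); (53, 57); (44, 5); (97, 121); (41, 35); (25, 47)]);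
  (([:: 0; 3; 2; 4; 1], [:: 1; 4; 0; 2; 3]), [:: (7, 105); (4, 95); (8, 4); (4, 73); (7, 104); (18, 114)]);
  (([:: 0; 1; 4; 2; 3], [:: 1; 2; 4; 0; 3]), [:: (8, 33); (8, 82); (16, 33); (8, 119); (1, 34); (36, 55)]);
  (([:: 0; 1; 3; 4; 2], [:: 1; 2; 3; 4; 0]), [:: (34, 112); (50, 95); (32, 51); (34, 16); (19, 75); (18, 91)]);
  (([:: 0; 4; 2; 1; 3], [:: 1; 4; 0; 2; 3]), [:: (62, 113); (64, 8); (27, 63); (64, 38); (47, 51); (22, 54)]);
  (([:: 0; 3; 4; 1; 2], [:: 1; 0; 4; 3; 2]), [:: (34, 24); (30, 67); (68, 13); (20, 51); (34, 24); (34, 106)]);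
  (([:: 0; 4; 2; 1; 3], [:: 1; 0; 2; 4; 3]), [:: (51, 36); (31, 66); (37, 103); (5, 31); (71, 37); (5, 89)]);
  (([:: 0; 2; 3; 1; 4], [:: 1; 2; 3; 4; 0]), [:: (59, 29); (2, 3); (28, 114); (3, 0); (3, 91); (104, 97)]);
  (([:: 0; 3; 4; 1; 2], [:: 1; 2; 3; 4; 0]), [:: (25, 21); (25, 98); (25, 89); (20, 30); (4, 41); (19, 101)]);
  (([:: 0; 3; 2; 4; 1], [:: 1; 3; 0; 4; 2]), [:: (2, 5); (31, 27); (25, 88); (25, 88); (2, 7); (2, 7)]);
  (([:: 0; 1; 4; 2; 3], [:: 1; 4; 3; 0; 2]), [:: (23, 103); (68, 19); (37, 18); (1, 108); (49, 118); (91, 118)]);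
  (([:: 0; 2; 4; 3; 1], [:: 1; 2; 4; 0; 3]), [:: (39, 111); (19, 52); (100, 87); (67, 16); (14, 44); (64, 89)]);
  (([:: 1; 3; 2; 0; 4], [:: 3; 2; 1; 0; 4]), [:: (40, 104); (55, 31); (20, 115); (115, 20); (55, 31); (88, 55)]);
  (([:: 1; 2; 3; 4; 0], [:: 4; 2; 0; 1; 3]), [:: (12, 36); (20, 32); (89, 53); (9, 115); (12, 40); (4, 32)]);
  (([:: 0; 2; 3; 1; 4], [:: 2; 3; 0; 1; 4]), [:: (18, 20); (34, 20); (18, 20); (56, 34); (2, 23); (2, 23)]);
  (([:: 0; 2; 4; 3; 1], [:: 2; 4; 0; 3; 1]), [:: (72, 49); (20, 49); (67, 56); (17, 90); (109, 20); (20, 67)]);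
  (([:: 0; 4; 2; 1; 3], [:: 2; 4; 3; 1; 0]), [:: (30, 100); (30, 100); (5, 105); (5, 105); (12, 89); (12, 90)]);
  (([:: 0; 2; 1; 4; 3], [:: 2; 3; 0; 1; 4]), [:: (31, 117); (31, 30); (28, 94); (28, 94); (8, 30); (19, 122)]);
  (([:: 0; 1; 4; 2; 3], [:: 2; 0; 4; 1; 3]), [:: (40, 113); (47, 37); (28, 36); (16, 31); (87, 25); (16, 46)]);
  (([:: 0; 1; 4; 2; 3], [:: 2; 0; 1; 3; 4]), [:: (0, 37); (0, 15); (0, 119); (15, 2); (31, 81); (0, 51)]);
  (([:: 0; 2; 3; 1; 4], [:: 2; 4; 1; 0; 3]), [:: (99, 52); (102, 48); (32, 78); (0, 102); (6, 121); (11, 117)]);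
  (([:: 1; 0; 2; 4; 3], [:: 1; 2; 3; 4; 0]), [:: (4, 52); (40, 92); (58, 46); (34, 7); (13, 90); (24, 52)]);
  (([:: 0; 2; 3; 1; 4], [:: 2; 0; 1; 3; 4]), [:: (6, 52); (40, 122); (2, 108); (2, 108); (56, 45); (6, 52)]);
  (([:: 0; 3; 1; 2; 4], [:: 2; 4; 3; 1; 0]), [:: (44, 104); (41, 53); (1, 67); (8, 86); (40, 65); (12, 52)]);
  (([:: 0; 3; 4; 1; 2], [:: 2; 3; 0; 1; 4]), [:: (44, 96); (2, 67); (24, 55); (2, 113); (41, 75); (21, 113)]);
  (([:: 2; 1; 3; 0; 4], [:: 3; 1; 2; 4; 0]), [:: (17, 37); (42, 44); (52, 112); (17, 112); (52, 44); (64, 102)]);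
  (([:: 0; 1; 4; 2; 3], [:: 2; 3; 1; 4; 0]), [:: (34, 25); (34, 15); (15, 75); (48, 76); (69, 77); (60, 101)]);
  (([:: 0; 4; 1; 3; 2], [:: 2; 1; 0; 4; 3]), [:: (57, 69); (47, 36); (1, 14); (1, 14); (0, 36); (1, 113)]);
  (([:: 0; 4; 1; 3; 2], [:: 2; 0; 1; 3; 4]), [:: (56, 109); (98, 57); (57, 33); (57, 33); (17, 98); (20, 93)]);
  (([:: 0; 1; 4; 2; 3], [:: 2; 4; 0; 3; 1]), [:: (74, 83); (21, 32); (2, 119); (9, 97); (4, 109); (2, 119)]);
  (([:: 0; 3; 1; 2; 4], [:: 2; 1; 0; 4; 3]), [:: (19, 44); (18, 28); (4, 101); (4, 101); (30, 5); (6, 80)]);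
  (([:: 0; 4; 2; 1; 3], [:: 2; 1; 3; 0; 4]), [:: (5, 88); (6, 100); (79, 120); (5, 111); (22, 50); (33, 118)]);
  (([:: 0; 3; 2; 4; 1], [:: 2; 0; 3; 4; 1]), [:: (23, 63); (28, 1); (80, 29); (53, 57); (49, 47); (64, 59)]);
  (([:: 0; 4; 1; 3; 2], [:: 3; 1; 2; 4; 0]), [:: (16, 83); (16, 83); (49, 42); (23, 72); (36, 75); (62, 102)]);
  (([:: 0; 4; 3; 2; 1], [:: 3; 2; 4; 1; 0]), [:: (15, 50); (29, 15); (3, 109); (6, 116); (29, 31); (13, 58)]);
  (([:: 0; 2; 1; 4; 3], [:: 3; 1; 0; 2; 4]), [:: (22, 93); (29, 11); (29, 45); (11, 28); (11, 42); (27, 42)]);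
  (([:: 1; 4; 0; 2; 3], [:: 2; 3; 1; 4; 0]), [:: (7, 6); (4, 60); (4, 116); (48, 24); (4, 123); (6, 37)]);
  (([:: 0; 1; 4; 2; 3], [:: 3; 0; 1; 4; 2]), [:: (30, 81); (30, 81); (0, 15); (17, 83); (0, 37); (110, 51)]);
  (([:: 0; 4; 2; 1; 3], [:: 3; 1; 2; 4; 0]), [:: (8, 36); (42, 115); (36, 92); (31, 42); (8, 78); (66, 14)]);
  (([:: 1; 3; 0; 4; 2], [:: 2; 3; 4; 0; 1]), [:: (6, 86); (6, 85); (6, 85); (28, 85); (15, 29); (22, 6)]);
  (([:: 0; 4; 3; 2; 1], [:: 3; 1; 2; 4; 0]), [:: (35, 91); (16, 15); (55, 65); (15, 27); (3, 84); (15, 27)]);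
  (([:: 0; 4; 2; 1; 3], [:: 3; 2; 4; 1; 0]), [:: (9, 81); (0, 4); (28, 72); (4, 69); (4, 103); (9, 89)]);
  (([:: 1; 0; 3; 2; 4], [:: 1; 3; 2; 0; 4]), [:: (52, 108); (52, 83); (104, 11); (52, 34); (23, 20); (23, 20)]);
  (([:: 0; 4; 2; 1; 3], [:: 3; 2; 0; 4; 1]), [:: (121, 67); (121, 77); (25, 36); (52, 36); (25, 77); (23, 74)]);
  (([:: 0; 1; 4; 2; 3], [:: 3; 1; 2; 4; 0]), [:: (120, 42); (80, 51); (37, 80); (118, 2); (37, 80); (120, 85)]);
  (([:: 0; 2; 4; 3; 1], [:: 3; 0; 1; 4; 2]), [:: (42, 69); (43, 55); (5, 102); (0, 117); (72, 117); (18, 86)]);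
  (([:: 0; 4; 2; 1; 3], [:: 3; 4; 2; 0; 1]), [:: (43, 108); (14, 115); (37, 76); (34, 43); (34, 5); (31, 14)]);
  (([:: 2; 0; 1; 3; 4], [:: 1; 2; 3; 4; 0]), [:: (14, 26); (14, 41); (14, 44); (14, 44); (25, 2); (25, 2)]);
  (([:: 0; 3; 4; 1; 2], [:: 3; 4; 0; 1; 2]), [:: (71, 120); (56, 116); (7, 102); (7, 102); (31, 97); (68, 48)]);
  (([:: 0; 4; 1; 3; 2], [:: 3; 4; 2; 0; 1]), [:: (53, 1); (53, 5); (72, 1); (49, 77); (72, 1); (98, 1)]);
  (([:: 1; 0; 4; 3; 2], [:: 1; 3; 2; 0; 4]), [:: (78, 12); (53, 90); (32, 56); (53, 98); (53, 98); (53, 98)]);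
  (([:: 0; 4; 3; 2; 1], [:: 3; 2; 0; 4; 1]), [:: (100, 114); (81, 89); (68, 105); (55, 105); (79, 110); (81, 113)]);
  (([:: 0; 1; 4; 2; 3], [:: 3; 1; 0; 2; 4]), [:: (57, 64); (57, 100); (77, 2); (37, 77); (37, 57); (112, 102)]);
  (([:: 0; 2; 1; 4; 3], [:: 3; 0; 2; 1; 4]), [:: (13, 63); (13, 12); (25, 75); (25, 75); (37, 19); (7, 118)]);
  (([:: 0; 1; 4; 2; 3], [:: 3; 2; 0; 4; 1]), [:: (4, 97); (4, 119); (28, 4); (28, 4); (24, 50); (28, 4)]);
  (([:: 0; 2; 3; 1; 4], [:: 3; 1; 2; 4; 0]), [:: (37, 117); (32, 71); (23, 30); (15, 91); (3, 101); (3, 110)]);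
  (([:: 0; 4; 3; 2; 1], [:: 3; 0; 1; 4; 2]), [:: (3, 89); (105, 3); (11, 72); (11, 72); (111, 10); (3, 89)]);
  (([:: 0; 3; 2; 4; 1], [:: 3; 2; 0; 4; 1]), [:: (21, 6); (22, 13); (11, 99); (3, 69); (3, 29); (28, 81)]);
  (([:: 1; 4; 0; 2; 3], [:: 2; 3; 0; 1; 4]), [:: (13, 80); (13, 80); (13, 80); (13, 80); (94, 28); (62, 28)]);
  (([:: 1; 3; 2; 0; 4], [:: 3; 4; 2; 0; 1]), [:: (37, 8); (72, 76); (31, 37); (35, 71); (8, 14); (8, 14)]);
  (([:: 0; 4; 3; 2; 1], [:: 4; 1; 3; 2; 0]), [:: (72, 58); (10, 58); (41, 60); (58, 101); (45, 67); (72, 3)]);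
  (([:: 2; 4; 1; 0; 3], [:: 3; 2; 4; 1; 0]), [:: (9, 50); (9, 85); (8, 63); (91, 63); (4, 93); (9, 67)]);
  (([:: 0; 2; 1; 4; 3], [:: 4; 2; 0; 1; 3]), [:: (37, 10); (105, 2); (25, 101); (23, 106); (69, 2); (81, 52)]);
  (([:: 0; 3; 2; 4; 1], [:: 4; 1; 2; 0; 3]), [:: (36, 51); (36, 83); (108, 36); (37, 90); (35, 72); (5, 98)]);
  (([:: 0; 3; 4; 1; 2], [:: 4; 1; 2; 0; 3]), [:: (36, 59); (36, 58); (18, 92); (0, 5); (22, 23); (22, 23)]);
  (([:: 0; 3; 2; 4; 1], [:: 4; 2; 0; 1; 3]), [:: (15, 89); (20, 69); (85, 103); (45, 103); (8, 29); (8, 29)]);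
  (([:: 0; 2; 1; 4; 3], [:: 4; 0; 1; 2; 3]), [:: (51, 19); (49, 55); (13, 63); (29, 63); (58, 65); (13, 31)]);
  (([:: 0; 3; 1; 2; 4], [:: 4; 2; 0; 1; 3]), [:: (74, 88); (2, 73); (2, 111); (2, 111); (35, 40); (33, 119)]);
  (([:: 1; 0; 3; 2; 4], [:: 1; 4; 0; 2; 3]), [:: (37, 59); (37, 6); (12, 24); (51, 1); (45, 74); (102, 8)]);
  (([:: 0; 1; 3; 4; 2], [:: 4; 1; 3; 2; 0]), [:: (40, 112); (2, 17); (41, 40); (51, 2); (17, 77); (17, 106)]);
  (([:: 0; 2; 4; 3; 1], [:: 4; 3; 1; 0; 2]), [:: (38, 44); (3, 72); (21, 49); (15, 90); (21, 45); (17, 43)]);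
  (([:: 0; 3; 1; 2; 4], [:: 4; 3; 2; 1; 0]), [:: (82, 2); (82, 70); (10, 78); (21, 78); (87, 101); (81, 108)]);
  (([:: 1; 0; 2; 4; 3], [:: 1; 4; 3; 0; 2]), [:: (0, 35); (56, 1); (56, 1); (22, 81); (0, 47); (68, 69)]);
  (([:: 0; 1; 3; 4; 2], [:: 4; 1; 0; 3; 2]), [:: (57, 58); (57, 58); (42, 58); (42, 85); (40, 57); (17, 58)]);
  (([:: 0; 3; 1; 2; 4], [:: 4; 0; 1; 2; 3]), [:: (5, 97); (17, 104); (84, 103); (17, 104); (12, 103); (12, 106)]);
  (([:: 0; 3; 2; 4; 1], [:: 4; 3; 0; 2; 1]), [:: (7, 23); (7, 97); (9, 26); (18, 105); (4, 111); (13, 114)]);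
  (([:: 0; 4; 2; 1; 3], [:: 4; 1; 0; 3; 2]), [:: (6, 21); (15, 85); (6, 67); (3, 67); (10, 28); (6, 93)]);
  (([:: 0; 1; 4; 2; 3], [:: 4; 2; 3; 0; 1]), [:: (9, 27); (34, 48); (4, 61); (4, 48); (60, 24); (9, 84)]);
  (([:: 0; 4; 2; 1; 3], [:: 4; 3; 1; 0; 2]), [:: (20, 3); (20, 7); (3, 61); (40, 99); (28, 92); (63, 19)]);
  (([:: 0; 3; 1; 2; 4], [:: 4; 3; 0; 2; 1]), [:: (60, 12); (5, 111); (7, 40); (60, 40); (79, 63); (2, 107)]);
  (([:: 0; 1; 4; 2; 3], [:: 4; 2; 0; 1; 3]), [:: (10, 90); (68, 1); (10, 103); (64, 60); (81, 88); (2, 59)]);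
  (([:: 0; 3; 2; 4; 1], [:: 4; 1; 3; 2; 0]), [:: (60, 1); (68, 69); (0, 5); (20, 4); (18, 69); (0, 59)]);
  (([:: 0; 3; 4; 1; 2], [:: 4; 0; 1; 2; 3]), [:: (42, 32); (42, 32); (12, 40); (68, 67); (4, 38); (4, 38)]);
  (([:: 0; 4; 2; 1; 3], [:: 4; 0; 3; 1; 2]), [:: (68, 41); (3, 80); (114, 82); (0, 40); (39, 33); (0, 40)]);
  (([:: 0; 4; 3; 2; 1], [:: 4; 1; 2; 0; 3]), [:: (15, 10); (12, 119); (21, 28); (16, 53); (21, 103); (62, 18)]);
  (([:: 0; 3; 2; 4; 1], [:: 4; 1; 0; 3; 2]), [:: (12, 84); (12, 35); (12, 35); (12, 35); (38, 120); (2, 123)]);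
  (([:: 0; 2; 4; 3; 1], [:: 4; 1; 3; 2; 0]), [:: (12, 13); (44, 71); (33, 53); (33, 53); (26, 122); (26, 122)]);
  (([:: 0; 3; 1; 2; 4], [:: 4; 1; 0; 3; 2]), [:: (11, 100); (11, 100); (95, 104); (52, 73); (6, 10); (6, 10)]);
  (([:: 0; 1; 3; 4; 2], [:: 4; 3; 2; 1; 0]), [:: (3, 19); (3, 19); (14, 20); (16, 18); (99, 19); (21, 74)]);
  (([:: 0; 2; 3; 1; 4], [:: 4; 1; 3; 2; 0]), [:: (101, 14); (14, 25); (14, 25); (20, 26); (123, 26); (123, 26)]);
  (([:: 0; 4; 1; 3; 2], [:: 4; 2; 0; 1; 3]), [:: (27, 14); (14, 47); (59, 69); (15, 14); (84, 69); (95, 113)])]].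

Definition A5_killed_values : seq (lperm 5) :=
  [seq lperm_of 5 k | k <- [:: [:: 0; 1; 3; 4; 2]; [:: 0; 2; 3; 1; 4]]].

Lemma A5_closure_cert : closure_certb A5_certificate.
Proof. by vm_compute. Qed.

Lemma A5_kill_closed : kill_closedb [seq c.1 | c <- A5_certificate] A5_killed_values.
Proof. by vm_compute. Qed.

Local Open Scope ring_scope.

Theorem theorem3 (T : eqType) (i : nat) (V : seq T) :
  (2 <= i)%N -> uniq V -> size V = (2 ^ i)%N ->
  (exists w, isW i V w) /\
  (forall w, isW i V w ->
     [/\ solves 2 V w,
         (flen w)%:R = 8%:R / 3%:R * 6%:R ^+ i - 4%:R * (size V)%:R ^+ 2 :> rat
       & (rlen w)%:R <= 8%:R / 3%:R * 6%:R ^+ i - 4%:R * (size V)%:R ^+ 2 :> rat]).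
Proof.
move=> le2i uV sV; split; first by case: i le2i sV => // i _; apply: exists_isW.
move=> w HW; have [K_neq1 K_closedl K_closedr] := kill_closedbP A5_kill_closed.
have kK : lperm_of 5 [:: 0; 1; 3; 4; 2]%N \in A5_killed_values := mem_head _ _.
have flen_w : (flen w)%:R = 8%:R / 3%:R * 6%:R ^+ i - 4%:R * (size V)%:R ^+ 2 :> rat.
  by rewrite (flen_isW HW) sV Wlen_rat.
have solves_w := isW_solves (closure_certbP A5_closure_cert) K_closedl K_closedr K_neq1 HW uV kK.
by split; rewrite // -flen_w ler_nat /rlen -size_raw size_reduce.
Qed.
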